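(* In the Banach space $\ell^\infty=(\ell^1)^*$ equipped with the weak$^*$ topology $\sigma(\ell^\infty,\ell^1)$, the set $A=\{e_1+e_n : n\in\mathbb{N}, n\ge 2\}$ is minimal but not topologically independent.
   Context: $e_i\in\ell^\infty$ denotes the sequence with $1$ in coordinate $i$ and $0$ elsewhere. A subset $A\subseteq X\setminus\{0\}$ of a topological vector space $X$ is topologically independent if for every neighborhood $W$ of $0$ there is a neighborhood $U$ of $0$ such that for every finite $F\subseteq A$ and integers $\{z_a: a\in F\}$, $\sum_{a\in F}z_a a\in U$ implies $z_a a\in W$ for all $a\in F$. $A$ is minimal if $a\notin\overline{\langle A\setminus\{a\}\rangle_{\mathbb{R}}}$ for every $a\in A$ (linear span, closure in $X$). *)

From Stdlib Require Import Reals List ZArith.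
From Coquelicot Require Import Coquelicot.
Open Scope R_scope.

Definition seqR := nat -> R.

Definition zero_seq : seqR := fun _ => 0.
Definition add_seq (x y : seqR) : seqR := fun k => x k + y k.
Definition scale_seq (r : R) (x : seqR) : seqR := fun k => r * x k.

Definition linf (x : seqR) : Prop := exists M : R, forall n, Rabs (x n) <= M.

Definition ell1 (y : seqR) : Prop := ex_series (fun n => Rabs (y n)).

Definition pairing (x y : seqR) : R := Series (fun n => x n * y n).

(* W is a neighbourhood of 0 in (ell^inf, sigma(ell^inf, ell^1)):
   it contains (the trace on ell^inf of) a basic weak* neighbourhood
   { x | |<x,y_j>| < eps for all j } with finitely many y_j in ell^1. *)
Definition wsnbhs0 (W : seqR -> Prop) : Prop :=
  exists (ys : list seqR) (eps : R),
    0 < eps /\ List.Forall ell1 ys /\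
    forall x, linf x -> (forall y, In y ys -> Rabs (pairing x y) < eps) -> W x.

Definition wsnbhs (p : seqR) (W : seqR -> Prop) : Prop :=
  wsnbhs0 (fun x => W (add_seq p x)).

Definition wsclosure (S : seqR -> Prop) (p : seqR) : Prop :=
  forall W, wsnbhs p W -> exists s, S s /\ W s.

Definition lincomb (l : list (R * seqR)) : seqR :=
  fold_right (fun p acc => add_seq (scale_seq (fst p) (snd p)) acc) zero_seq l.

Definition rspan (A : seqR -> Prop) (x : seqR) : Prop :=
  exists l : list (R * seqR), List.Forall (fun p => A (snd p)) l /\ x = lincomb l.

Definition zsum (F : list seqR) (z : seqR -> Z) : seqR :=
  fold_right (fun a acc => add_seq (scale_seq (IZR (z a)) a) acc) zero_seq F.

Definition top_independent (A : seqR -> Prop) : Prop :=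
  forall W, wsnbhs0 W ->
    exists U, wsnbhs0 U /\
      forall (F : list seqR) (z : seqR -> Z),
        NoDup F -> (forall a, In a F -> A a) ->
        U (zsum F z) ->
        forall a, In a F -> W (scale_seq (IZR (z a)) a).

Definition minimal (A : seqR -> Prop) : Prop :=
  forall a, A a -> ~ wsclosure (rspan (fun b => A b /\ b <> a)) a.

Definition e (i : nat) : seqR := fun k => if Nat.eqb k i then 1 else 0.

Definition A14 (x : seqR) : Prop :=
  exists n : nat, (2 <= n)%nat /\ x = add_seq (e 1) (e n).

(* Minimality: the coordinate functional [x |-> x n] is weak* continuous, equals 1 on
   [e_1 + e_n] and vanishes on every other element of A, hence on the weak* closure of
   their span.
   Failure of topological independence: every weak* neighbourhood of 0 is controlled by
   finitely many [y] in ell^1, whose coordinates all become small, so it contains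
   [e_n - e_k = (e_1 + e_n) - (e_1 + e_k)] for all large [n, k]; yet the summand
   [e_1 + e_n] of this integer combination stays outside [{x | |x 1| < 1/2}]. *)

From Stdlib Require Import Reals List ZArith Lia Lra FunctionalExtensionality.
From Coquelicot Require Import Coquelicot.
Open Scope R_scope.

Lemma e_same (i : nat) : e i i = 1.
Proof. unfold e; now rewrite Nat.eqb_refl. Qed.

Lemma e_other (i k : nat) : k <> i -> e i k = 0.
Proof. intro H; unfold e; apply Nat.eqb_neq in H; now rewrite H. Qed.

Lemma Rabs_e_le1 (i k : nat) : Rabs (e i k) <= 1.
Proof. unfold e; destruct (Nat.eqb k i); rewrite ?Rabs_R1, ?Rabs_R0; lra. Qed.

Lemma sum_n_e_mult (m : nat) (c : seqR) (N : nat) :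
  sum_n (fun j => e m j * c j) N = if Nat.leb m N then c m else 0.
Proof.
  induction N as [|N IH];
    [rewrite sum_O | rewrite sum_Sn, IH; change plus with Rplus];
    (* the sums live in Coquelicot's abelian monoid on [R]; restate as equations in [R] *)
    match goal with |- ?l = ?r => change (@eq R l r) end.
  - destruct m as [|m]; simpl.
    + rewrite e_same; ring.
    + rewrite e_other by lia; ring.
  - destruct (Nat.eq_dec m (S N)) as [->|Hne].
    + rewrite e_same, Nat.leb_refl.
      replace (Nat.leb (S N) N) with false by (symmetry; apply Nat.leb_gt; lia); ring.
    + rewrite e_other by lia.
      destruct (Nat.leb m N) eqn:HmN.
      * apply Nat.leb_le in HmN.
        replace (Nat.leb m (S N)) with true by (symmetry; apply Nat.leb_le; lia); ring.
      * apply Nat.leb_gt in HmN.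
        replace (Nat.leb m (S N)) with false by (symmetry; apply Nat.leb_gt; lia); ring.
Qed.

Lemma is_series_e_mult (m : nat) (c : seqR) : is_series (fun j => e m j * c j) (c m).
Proof.
  enough (H : is_lim_seq (sum_n (fun j => e m j * c j)) (c m)) by exact H.
  apply (is_lim_seq_ext_loc (fun _ => c m)); [|apply is_lim_seq_const].
  exists m; intros n Hn; rewrite sum_n_e_mult.
  apply Nat.leb_le in Hn; now rewrite Hn.
Qed.

Lemma ell1_e (m : nat) : ell1 (e m).
Proof.
  exists 1; eapply is_series_ext; [|apply (is_series_e_mult m (fun _ => 1))].
  intro n; simpl; unfold e; destruct (Nat.eqb n m); rewrite ?Rabs_R1, ?Rabs_R0; ring.
Qed.

Lemma pairing_e (x : seqR) (m : nat) : pairing x (e m) = x m.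
Proof.
  apply is_series_unique.
  eapply is_series_ext; [|apply (is_series_e_mult m x)]; intro; simpl; ring.
Qed.

Lemma linf_e (i : nat) : linf (e i).
Proof. exists 1; apply Rabs_e_le1. Qed.

Lemma linf_add (x y : seqR) : linf x -> linf y -> linf (add_seq x y).
Proof.
  intros [Mx Hx] [My Hy]; exists (Mx + My); intro k; unfold add_seq.
  eapply Rle_trans; [apply Rabs_triang|]; specialize (Hx k); specialize (Hy k); lra.
Qed.

Lemma linf_scale (r : R) (x : seqR) : linf x -> linf (scale_seq r x).
Proof.
  intros [M HM]; exists (Rabs r * M); intro k; unfold scale_seq; rewrite Rabs_mult.
  apply Rmult_le_compat_l; [apply Rabs_pos|apply HM].
Qed.

Lemma wsnbhs0_coord (m : nat) (eps : R) : 0 < eps -> wsnbhs0 (fun x => Rabs (x m) < eps).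
Proof.
  intro Heps; exists (e m :: nil), eps; repeat split; auto using ell1_e.
  intros x _ Hx; rewrite <- pairing_e; apply Hx; now left.
Qed.

Lemma wsnbhs0_mono (V W : seqR -> Prop) :
  (forall x, V x -> W x) -> wsnbhs0 V -> wsnbhs0 W.
Proof.
  intros HVW [ys [eps [Heps [Hys HV]]]].
  exists ys, eps; repeat split; auto.
Qed.

Lemma ell1_list_uniform_tail (ys : list seqR) (d : R) : 0 < d -> List.Forall ell1 ys ->
  exists N, forall y, In y ys -> forall n, (N <= n)%nat -> Rabs (y n) < d.
Proof.
  intros Hd Hys; induction Hys as [|y ys Hy _ [N1 HN1]].
  - exists 0%nat; intros y [].
  - apply ex_series_lim_0, is_lim_seq_spec in Hy.
    destruct (Hy (mkposreal d Hd)) as [N2 HN2].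
    exists (Nat.max N1 N2); intros y' [<-|Hin] n Hn.
    + specialize (HN2 n ltac:(lia)); simpl in HN2.
      now rewrite Rminus_0_r, Rabs_Rabsolu in HN2.
    + apply HN1; auto; lia.
Qed.

Definition e_sub (n k : nat) : seqR := add_seq (e n) (scale_seq (-1) (e k)).

Lemma pairing_e_sub (n k : nat) (y : seqR) : pairing (e_sub n k) y = y n - y k.
Proof.
  apply is_series_unique.
  eapply is_series_ext;
    [|apply (is_series_minus _ _ _ _ (is_series_e_mult n y) (is_series_e_mult k y))].
  intro j; unfold e_sub, add_seq, scale_seq, minus, plus, opp; simpl; ring.
Qed.

Lemma wsnbhs0_e_sub_eventually (U : seqR -> Prop) : wsnbhs0 U ->
  exists N, forall n k, (N <= n)%nat -> (N <= k)%nat -> U (e_sub n k).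
Proof.
  intros [ys [eps [Heps [Hys HU]]]].
  destruct (ell1_list_uniform_tail ys (eps / 2) ltac:(lra) Hys) as [N HN].
  exists N; intros n k Hn Hk; apply HU.
  - apply linf_add; [|apply linf_scale]; apply linf_e.
  - intros y Hy; rewrite pairing_e_sub; unfold Rminus.
    eapply Rle_lt_trans; [apply Rabs_triang|]; rewrite Rabs_Ropp.
    pose proof (HN y Hy n Hn); pose proof (HN y Hy k Hk); lra.
Qed.

Lemma rspan_coord0 (S : seqR -> Prop) (m : nat) (x : seqR) :
  (forall s, S s -> s m = 0) -> rspan S x -> x m = 0.
Proof.
  intros HS [l [Hl ->]].
  induction Hl as [|p l Hp _ IH]; simpl; [reflexivity|].
  unfold add_seq, scale_seq; rewrite IH, (HS _ Hp); ring.
Qed.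

Lemma wsclosure_coord0 (S : seqR -> Prop) (m : nat) (p : seqR) :
  (forall s, S s -> s m = 0) -> wsclosure S p -> p m = 0.
Proof.
  intros HS Hp; destruct (Req_dec (p m) 0) as [|Hpm]; [assumption|exfalso].
  destruct (Hp (fun s => Rabs (s m - p m) < Rabs (p m))) as [s [Ss Hs]].
  - apply (wsnbhs0_mono (fun x => Rabs (x m) < Rabs (p m)));
      [|apply wsnbhs0_coord, Rabs_pos_lt, Hpm].
    intros x; unfold add_seq; now replace (p m + x m - p m) with (x m) by ring.
  - rewrite (HS s Ss), Rminus_0_l, Rabs_Ropp in Hs; lra.
Qed.

Lemma A14_linf_nonzero (x : seqR) : A14 x -> linf x /\ x <> zero_seq.
Proof.
  intros [n [Hn ->]]; split; [apply linf_add; apply linf_e|].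
  intro H0; apply (f_equal (fun f => f 1%nat)) in H0.
  unfold add_seq, zero_seq in H0; rewrite e_same, e_other in H0 by lia; lra.
Qed.

Lemma A14_minimal : minimal A14.
Proof.
  intros a [m [Hm ->]] Hcl.
  apply wsclosure_coord0 with (m := m) in Hcl.
  - unfold add_seq in Hcl; rewrite e_same, e_other in Hcl by lia; lra.
  - intros s; apply rspan_coord0.
    intros b [[n [Hn ->]] Hne].
    assert (n <> m) by (intros ->; now apply Hne).
    unfold add_seq; rewrite !e_other by lia; ring.
Qed.

Lemma A14_not_top_independent : ~ top_independent A14.
Proof.
  intro HTI.
  destruct (HTI _ (wsnbhs0_coord 1 (/ 2) ltac:(lra))) as [U [HU HUz]].
  destruct (wsnbhs0_e_sub_eventually U HU) as [N HN].
  set (n := Nat.max N 2); set (k := S n).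
  set (a := add_seq (e 1) (e n)); set (b := add_seq (e 1) (e k)).
  (* integer coefficients +1 on [a] and -1 on [b], told apart by their [n]-th coordinate *)
  set (z := fun c : seqR => if Req_EM_T (c n) 1 then 1%Z else (-1)%Z).
  assert (Ha : a n = 1) by (unfold a, add_seq; rewrite e_same, e_other by lia; ring).
  assert (Hb : b n = 0) by (unfold b, add_seq; rewrite !e_other by lia; ring).
  assert (Hza : z a = 1%Z) by (unfold z; destruct (Req_EM_T (a n) 1); easy).
  assert (Hzb : z b = (-1)%Z) by (unfold z; destruct (Req_EM_T (b n) 1); [lra|easy]).
  assert (Hzsum : zsum (a :: b :: nil) z = e_sub n k).
  { apply functional_extensionality; intro j; simpl.
    unfold e_sub, add_seq, scale_seq, zero_seq; rewrite Hza, Hzb.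
    unfold a, b, add_seq; simpl; ring. }
  assert (Hab : a <> b) by (intro E; rewrite E in Ha; lra).
  assert (Hnodup : NoDup (a :: b :: nil)).
  { repeat constructor; simpl; intuition. }
  assert (HA : forall c, In c (a :: b :: nil) -> A14 c).
  { intros c [<-|[<-|[]]]; [exists n|exists k]; split; auto; lia. }
  assert (HUab : U (zsum (a :: b :: nil) z)) by (rewrite Hzsum; apply HN; lia).
  specialize (HUz _ z Hnodup HA HUab a (or_introl eq_refl)).
  rewrite Hza in HUz; unfold scale_seq, a, add_seq in HUz.
  rewrite e_same, e_other, Rplus_0_r, Rmult_1_l, Rabs_R1 in HUz by lia; lra.
Qed.

Theorem mainTheorem14 :
  (forall x, A14 x -> linf x /\ x <> zero_seq) /\
  minimal A14 /\ ~ top_independent A14.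
Proof.
  split; [exact A14_linf_nonzero|].
  split; [exact A14_minimal|exact A14_not_top_independent].
Qed.
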